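(* Let $\mathcal{L}\subseteq\mathbb{S}^n$ be a regular linear subspace. Every point of $\mathcal{L}^{-1}\cap\mathcal{L}^\perp$ is a non-invertible matrix.
   Context: $\mathbb{S}^n$ denotes the space of complex symmetric $n\times n$ matrices. A linear subspace $\mathcal{L}$ is regular if it contains a full-rank matrix. $\mathcal{L}^\perp=\{\Sigma:\mathrm{tr}(K\Sigma)=0\ \forall K\in\mathcal{L}\}$. The reciprocal variety $\mathcal{L}^{-1}$ is the Zariski closure of the set of inverses of invertible matrices in $\mathcal{L}$. *)

From HB Require Import structures.
From mathcomp Require Import all_boot all_algebra.
From mathcomp Require Import mpoly.
From mathcomp Require Import reals.
From mathcomp.real_closed Require Import complex.
Set Implicit Arguments. Unset Strict Implicit. Unset Printing Implicit Defensive.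
Import GRing.Theory.
Local Open Scope ring_scope.

Definition symmx (F : nzRingType) (n : nat) (A : 'M[F]_n) : Prop := A^T = A.

Definition in_Sym (F : fieldType) (n : nat) (L : {vspace 'M[F]_n}) : Prop :=
  forall K, K \in L -> symmx K.

Definition regular_subspace (F : fieldType) (n : nat) (L : {vspace 'M[F]_n}) : Prop :=
  exists K, K \in L /\ K \in unitmx.

Definition perp_sym (F : fieldType) (n : nat) (L : {vspace 'M[F]_n})
  (S : 'M[F]_n) : Prop :=
  symmx S /\ forall K, K \in L -> \tr (K *m S) = 0.

Definition mx_eval (F : fieldType) (n : nat) (p : {mpoly F[n * n]})
  (A : 'M[F]_n) : F := p.@[fun i => mxvec A 0 i].

Definition zariski_closure (F : fieldType) (n : nat) (X : 'M[F]_n -> Prop)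
  : 'M[F]_n -> Prop :=
  fun A => forall p : {mpoly F[n * n]},
    (forall B, X B -> mx_eval p B = 0) -> mx_eval p A = 0.

Definition reciprocal_variety (F : fieldType) (n : nat) (L : {vspace 'M[F]_n})
  : 'M[F]_n -> Prop :=
  zariski_closure (fun B => exists2 K, (K \in L) && (K \in unitmx) & B = invmx K).

From HB Require Import structures.
From mathcomp Require Import all_boot all_algebra.
From mathcomp Require Import mpoly.
From mathcomp Require Import reals.
From mathcomp.real_closed Require Import complex.
Local Open Scope ring_scope.
Import GRing.Theory Num.Theory.

Set Implicit Arguments. Unset Strict Implicit.

(* The map A |-> tr(adj(A) S) is polynomial in the entries of A.  At A = K^-1
   with K in L it equals det(K^-1) tr(K S), which vanishes when S is in L^perp,
   so it also vanishes on the Zariski closure L^-1.  At A = S it equals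
   tr(det(S) I) = n det(S); in characteristic 0 this forces det(S) = 0. *)

Section MxPolyFun.
Variables (F : fieldType) (n : nat).

Definition mx_poly_fun (f : 'M[F]_n -> F) : Prop :=
  exists p : {mpoly F[n * n]}, forall A, mx_eval p A = f A.

Lemma mx_poly_fun_ext f g : f =1 g -> mx_poly_fun f -> mx_poly_fun g.
Proof. by move=> efg [p hp]; exists p => A; rewrite hp efg. Qed.

Lemma mx_poly_fun_cst c : mx_poly_fun (fun _ => c).
Proof. by exists c%:MP => A; rewrite /mx_eval mevalC. Qed.

Lemma mx_poly_fun_entry i j : mx_poly_fun (fun A => A i j).
Proof.
by exists 'X_(mxvec_index i j) => A; rewrite /mx_eval mevalXU mxvecE.
Qed.

Lemma mx_poly_funD f g :
  mx_poly_fun f -> mx_poly_fun g -> mx_poly_fun (fun A => f A + g A).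
Proof.
by move=> [p hp] [q hq]; exists (p + q) => A; rewrite -hp -hq /mx_eval mevalD.
Qed.

Lemma mx_poly_funM f g :
  mx_poly_fun f -> mx_poly_fun g -> mx_poly_fun (fun A => f A * g A).
Proof.
by move=> [p hp] [q hq]; exists (p * q) => A; rewrite -hp -hq /mx_eval mevalM.
Qed.

Lemma mx_poly_fun_sum (I : Type) (r : seq I) (P : pred I) (G : I -> 'M[F]_n -> F) :
  (forall i, mx_poly_fun (G i)) ->
  mx_poly_fun (fun A => \sum_(i <- r | P i) G i A).
Proof.
move=> polyG; elim: r => [|x r IHr].
  by apply: mx_poly_fun_ext (mx_poly_fun_cst 0) => A; rewrite big_nil.
have [Px | nPx] := boolP (P x).
  by apply: mx_poly_fun_ext (mx_poly_funD (polyG x) IHr) => A; rewrite big_cons Px.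
by apply: mx_poly_fun_ext IHr => A; rewrite big_cons (negPf nPx).
Qed.

Lemma mx_poly_fun_prod (I : Type) (r : seq I) (P : pred I) (G : I -> 'M[F]_n -> F) :
  (forall i, mx_poly_fun (G i)) ->
  mx_poly_fun (fun A => \prod_(i <- r | P i) G i A).
Proof.
move=> polyG; elim: r => [|x r IHr].
  by apply: mx_poly_fun_ext (mx_poly_fun_cst 1) => A; rewrite big_nil.
have [Px | nPx] := boolP (P x).
  by apply: mx_poly_fun_ext (mx_poly_funM (polyG x) IHr) => A; rewrite big_cons Px.
by apply: mx_poly_fun_ext IHr => A; rewrite big_cons (negPf nPx).
Qed.

Lemma mx_poly_fun_det m (M : 'M[F]_n -> 'M[F]_m) :
  (forall i j, mx_poly_fun (fun A => M A i j)) -> mx_poly_fun (fun A => \det (M A)).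
Proof.
move=> polyM; apply: mx_poly_fun_sum => s.
apply: mx_poly_funM; first exact: mx_poly_fun_cst.
by apply: mx_poly_fun_prod => i; apply: polyM.
Qed.

Lemma mx_poly_fun_adj i j : mx_poly_fun (fun A => \adj A i j).
Proof.
apply: (@mx_poly_fun_ext (fun A => cofactor A j i)); first by move=> A; rewrite mxE.
apply: mx_poly_funM; first exact: mx_poly_fun_cst.
apply: mx_poly_fun_det => a b.
by apply: mx_poly_fun_ext (mx_poly_fun_entry (lift j a) (lift i b)) => A; rewrite !mxE.
Qed.

Lemma mx_poly_fun_tr_adj_mulmx (S : 'M[F]_n) :
  mx_poly_fun (fun A => \tr (\adj A *m S)).
Proof.
apply: mx_poly_fun_sum => i.
apply: (@mx_poly_fun_ext (fun A => \sum_k \adj A i k * S k i)); first by move=> A; rewrite mxE.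
by apply: mx_poly_fun_sum => k; apply: mx_poly_funM (mx_poly_fun_adj i k) (mx_poly_fun_cst _).
Qed.

Lemma zariski_closure_poly_fun_eq0 (X : 'M[F]_n -> Prop) f A :
  mx_poly_fun f -> (forall B, X B -> f B = 0) -> zariski_closure X A -> f A = 0.
Proof. by move=> [p hp] fX0 /(_ p); rewrite hp; apply=> B /fX0; rewrite hp. Qed.

End MxPolyFun.

Lemma adj_invmx (R : comUnitRingType) n (K : 'M[R]_n) :
  K \in unitmx -> \adj (invmx K) = \det (invmx K) *: K.
Proof.
move=> Ku; have Kiu : invmx K \in unitmx by rewrite unitmx_inv.
rewrite -[\adj _]mul1mx -(mulVmx Kiu) -mulmxA mul_mx_adj invmxK.
by rewrite mul_mx_scalar.
Qed.

Lemma reciprocal_perp_det_muln_eq0 (F : fieldType) n (L : {vspace 'M[F]_n}) S :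
  reciprocal_variety L S -> (forall K, K \in L -> \tr (K *m S) = 0) ->
  \det S *+ n = 0.
Proof.
move=> LiS perpS; rewrite -mxtrace_scalar -mul_adj_mx.
apply: zariski_closure_poly_fun_eq0 (mx_poly_fun_tr_adj_mulmx S) _ LiS.
move=> _ [K /andP [KL Ku] ->].
by rewrite adj_invmx // -scalemxAl mxtraceZ perpS // mulr0.
Qed.

Theorem lemma2p6 (R : realType) (n : nat) (Hn : (0 < n)%N)
  (L : {vspace 'M[R[i]]_n})
  (HLsym : in_Sym L) (HLreg : regular_subspace L)
  (S : 'M[R[i]]_n) :
  reciprocal_variety L S -> perp_sym L S -> S \notin unitmx.
Proof.
move=> LiS [_ perpS].
have /eqP := reciprocal_perp_det_muln_eq0 LiS perpS.
rewrite mulrn_eq0 eqn0Ngt Hn /= => /eqP detS0.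
by rewrite unitmxE unitfE detS0 eqxx.
Qed.
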